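(* Let $\sigma$ be the substitution on $\{0,1\}$ given by $\sigma(0)=01$, $\sigma(1)=00$, let $X_\sigma\subset\{0,1\}^{\mathbb Z}$ be its subshift with shift map $S$, and let $T:X_\sigma\times\mathbb Z_3\to X_\sigma\times\mathbb Z_3$ be $T(x,z)=(Sx,z+1)$. Then the system $(X_\sigma\times\mathbb Z_3,T)$ is neither expansive nor equicontinuous.
   Context: $X_\sigma$ is the set of bi-infinite sequences over $\{0,1\}$ all of whose finite subwords are subwords of $\sigma^k(a)$ for some $a\in\{0,1\}$, $k\ge1$ (with $\sigma$ extended to words by concatenation); $S(x)_i=x_{i+1}$. $\mathbb Z_3$ is the ring of $3$-adic integers. $T$ is expansive if there is $\delta>0$ such that distinct points are separated by more than $\delta$ along some iterate; equicontinuous if the family $\{T^n\}_{n\in\mathbb Z}$ is equicontinuous. *)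

From HB Require Import structures.
From mathcomp Require Import all_boot all_order all_algebra.
From mathcomp Require Import all_classical all_reals.
Set Implicit Arguments. Unset Strict Implicit. Unset Printing Implicit Defensive.
Import Order.TTheory GRing.Theory Num.Theory.
Local Open Scope ring_scope.
Local Open Scope classical_set_scope.

(* Alphabet {0,1}: 0 = false, 1 = true. *)
Definition sigma (a : bool) : seq bool :=
  if a then [:: false; false] else [:: false; true].

Definition sigma_word (w : seq bool) : seq bool := flatten (map sigma w).

Definition sigma_iter (k : nat) (a : bool) : seq bool := iter k sigma_word [:: a].

Definition biseq := int -> bool.

Definition subword (x : biseq) (i : int) (n : nat) : seq bool :=
  mkseq (fun j : nat => x (i + j%:Z)) n.

Definition in_Xsigma (x : biseq) : Prop :=
  forall (i : int) (n : nat), exists (a : bool) (k : nat),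
    (1 <= k)%N /\ infix (subword x i n) (sigma_iter k a).

Definition shift (x : biseq) : biseq := fun i => x (i + 1).
Definition shift_inv (x : biseq) : biseq := fun i => x (i - 1).

(* 3-adic integers, as the inverse limit of Z/3^n Z: compatible sequences
   of residues z n in [0, 3^n). *)
Definition pow3 (n : nat) : int := (3 ^ n)%N%:Z.
Definition is_Z3 (z : nat -> int) : Prop :=
  forall n : nat, 0 <= z n < pow3 n /\ (z n.+1 = z n %[mod pow3 n])%Z.

Definition Z3_addc (c : int) (z : nat -> int) : nat -> int :=
  fun n => ((z n + c) %% pow3 n)%Z.

Definition point := (biseq * (nat -> int))%type.
Definition in_space (p : point) : Prop := in_Xsigma p.1 /\ is_Z3 p.2.
Definition T (p : point) : point := (shift p.1, Z3_addc 1 p.2).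
Definition T_inv (p : point) : point := (shift_inv p.1, Z3_addc (-1) p.2).

Definition Titer (n : int) (p : point) : point :=
  match n with
  | Posz m => iter m T p
  | Negz m => iter m.+1 T_inv p
  end.

(* Metrics: on the shift, d(x,y) = 2^{-min{|i| : x_i <> y_i}} (0 if x = y);
   on Z_3 the 3-adic metric |z - w|_3; on the product the max metric. *)
Definition dX {R : realType} (x y : biseq) : R :=
  inf [set r : R | r = 1 \/
        exists n : nat, (forall i : int, `|i| <= n%:Z -> x i = y i)
                        /\ r = (2%:R : R) ^- n.+1].
Definition dZ3 {R : realType} (z w : nat -> int) : R :=
  inf [set r : R | exists n : nat, z n = w n /\ r = (3%:R : R) ^- n].
Definition dist {R : realType} (p q : point) : R :=
  Num.max (dX p.1 q.1) (dZ3 p.2 q.2).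

Definition expansive (R : realType) : Prop :=
  exists delta : R, 0 < delta /\
    forall p q : point, in_space p -> in_space q -> p <> q ->
      exists n : int, delta < dist (Titer n p) (Titer n q).

Definition equicontinuous (R : realType) : Prop :=
  forall p : point, in_space p -> forall eps : R, 0 < eps ->
    exists delta : R, 0 < delta /\
      forall q : point, in_space q -> dist p q < delta ->
        forall n : int, dist (Titer n p) (Titer n q) < eps.

(* Let t(m) be the parity of the 2-adic valuation of m (with t(0) = 0).  Then
   sigma^k(0) = t(1) t(2) ... t(2^k), and t(m + 2^K) = t(m) whenever
   0 < |m| < 2^K, and also for m = 0 when K is even.  Shifting a window of t
   by a large even power of 2 therefore places it inside some sigma^k(0), so
   every translate of t lies in X_sigma.
   Not expansive: (t, 0) and (t, 3^N) stay 3^-N-close along the whole orbit.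
   Not equicontinuous: for even L, t and t(. + 2^L) agree on |i| < 2^L, but
   after 2^L shifts their 0-th letters are t(2^L) = 0 and t(2^(L+1)) = 1. *)

From Pilot Require Import Defs.
From mathcomp Require Import all_boot all_order all_algebra.
From mathcomp Require Import all_classical all_reals.
From mathcomp Require Import zify ring.
Set Implicit Arguments. Unset Strict Implicit. Unset Printing Implicit Defensive.
Import Order.TTheory GRing.Theory Num.Theory.
Local Open Scope ring_scope.

Lemma sigma_word_cat s t : sigma_word (s ++ t) = sigma_word s ++ sigma_word t.
Proof. by rewrite /sigma_word map_cat flatten_cat. Qed.

Lemma iter_sigma_word_cat k s t :
  iter k sigma_word (s ++ t) = iter k sigma_word s ++ iter k sigma_word t.
Proof. by elim: k => //= k ->; rewrite sigma_word_cat. Qed.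

Lemma sigma_iterS k a :
  sigma_iter k.+1 a = sigma_iter k false ++ sigma_iter k (~~ a).
Proof.
rewrite /sigma_iter iterSr.
have -> : sigma_word [:: a] = [:: false] ++ [:: ~~ a] by case: a.
by rewrite iter_sigma_word_cat.
Qed.

Lemma size_sigma_iter k a : size (sigma_iter k a) = (2 ^ k)%N.
Proof.
elim: k a => [|k IH] a //.
by rewrite sigma_iterS size_cat !IH expnS mul2n addnn.
Qed.

Lemma logn_eq_dvd p a b : prime p -> (0 < a)%N -> (0 < b)%N ->
  (forall k, (p ^ k %| a) = (p ^ k %| b))%N -> logn p a = logn p b.
Proof.
move=> p_pr a_gt0 b_gt0 dvd_ab.
have le_log k : (k <= logn p a)%N = (k <= logn p b)%N.
  by rewrite -!pfactor_dvdn // dvd_ab.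
by apply/eqP; rewrite eqn_leq le_log leqnn -le_log leqnn.
Qed.

Lemma logn_addz_dvd p K (m d : int) : prime p ->
  ~~ ((p ^ K)%N%:Z %| m)%Z -> ((p ^ K)%N%:Z %| d)%Z ->
  logn p `|m + d| = logn p `|m|.
Proof.
move=> p_pr ndvd_m dvd_d.
have m_neq0 : m != 0 by apply: contraNneq ndvd_m => ->; apply: dvdz0.
have md_neq0 : m + d != 0.
  apply: contraNneq ndvd_m => /eqP; rewrite addr_eq0 => /eqP ->.
  by rewrite rpredN.
apply: logn_eq_dvd; rewrite ?absz_gt0 // => k.
rewrite -[(p ^ k)%N]/`|(p ^ k)%N%:Z|%N -!dvdzE.
have [le_kK | lt_Kk] := leqP k K.
  apply: rpredDr; apply: dvdz_trans dvd_d.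
  by rewrite dvdzE /= dvdn_exp2l.
have dvd_pK : ((p ^ K)%N%:Z %| (p ^ k)%N%:Z)%Z by rewrite dvdzE /= dvdn_exp2l // ltnW.
apply/idP/idP => /(dvdz_trans dvd_pK); last by rewrite (negbTE ndvd_m).
by rewrite rpredDr // (negbTE ndvd_m).
Qed.

Definition toeplitz (m : int) : bool := odd (logn 2 `|m|).

Lemma toeplitz_exp2 K : toeplitz (2 ^ K)%N = odd K.
Proof. by rewrite /toeplitz /= pfactorK. Qed.

Lemma toeplitz_addr_exp2 K (m : int) : m != 0 -> `|m| < (2 ^ K)%N ->
  toeplitz (m + (2 ^ K)%N) = toeplitz m.
Proof.
move=> m_neq0 lt_m; rewrite /toeplitz (@logn_addz_dvd 2 K) ?dvdzz //.
rewrite dvdzE /=; apply: contraTN lt_m => /(dvdn_leq _) le_m.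
by rewrite -leNgt lez_nat le_m // absz_gt0.
Qed.

Lemma toeplitz_addr_exp2_even K (m : int) : ~~ odd K -> `|m| < (2 ^ K)%N ->
  toeplitz (m + (2 ^ K)%N) = toeplitz m.
Proof.
move=> K_even lt_m; have [->|m_neq0] := eqVneq m 0; last exact: toeplitz_addr_exp2.
by rewrite add0r toeplitz_exp2 (negbTE K_even).
Qed.

Lemma nth_sigma_iter k a n : (n < 2 ^ k)%N ->
  nth false (sigma_iter k a) n =
  if n.+1 == (2 ^ k)%N then a (+) odd k else toeplitz n.+1.
Proof.
elim: k a n => [|k IH] a n.
  by rewrite expn0 ltnS leqn0 => /eqP ->; rewrite addbF.
rewrite sigma_iterS nth_cat size_sigma_iter expnS mul2n -addnn => lt_n.
have [lt_nk | le_kn] := ltnP n (2 ^ k).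
  have -> : (n.+1 == 2 ^ k + 2 ^ k)%N = false by apply/eqP; have := expn_gt0 2 k; lia.
  rewrite IH //.
  by case: eqP => // ->; rewrite toeplitz_exp2.
rewrite IH ?ltn_subLR //.
have -> : ((n - 2 ^ k).+1 == 2 ^ k)%N = (n.+1 == 2 ^ k + 2 ^ k)%N by apply/eqP/eqP; lia.
case: eqP => [_ | ne]; first by rewrite /= addNb addbN.
have -> : n.+1 = ((n - 2 ^ k).+1 + 2 ^ k)%N by lia.
by rewrite PoszD toeplitz_addr_exp2 //; lia.
Qed.

Lemma sigma_iter_false k :
  sigma_iter k false = mkseq (fun n => toeplitz n.+1) (2 ^ k).
Proof.
apply: (@eq_from_nth _ false); first by rewrite size_sigma_iter size_mkseq.
move=> n; rewrite size_sigma_iter => lt_n.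
rewrite nth_sigma_iter // nth_mkseq //.
by case: eqP => // ->; rewrite toeplitz_exp2.
Qed.

Lemma infix_mkseq (T : eqType) (f h : nat -> T) n m d : (d + n <= m)%N ->
  (forall t, (t < n)%N -> f t = h (d + t)%N) -> infix (mkseq f n) (mkseq h m).
Proof.
move=> le_dn_m f_h; apply/infixP.
exists (take d (mkseq h m)), (drop (d + n) (mkseq h m)).
have -> : mkseq f n = take n (drop d (mkseq h m)).
  apply: (@eq_from_nth _ (f 0%N)).
    by rewrite size_mkseq size_takel // size_drop size_mkseq; lia.
  move=> t; rewrite size_mkseq => lt_t.
  by rewrite nth_mkseq // nth_take // nth_drop nth_mkseq ?f_h //; lia.
by rewrite addnC -drop_drop !cat_take_drop.
Qed.

Lemma toeplitz_window (j : int) n : exists2 k, (1 <= k)%N &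
  infix (mkseq (fun t => toeplitz (j + t%:Z)) n) (sigma_iter k false).
Proof.
set K := (`|j| + n).*2.
have lt_jn : (`|j| + n < 2 ^ K)%N.
  by apply: leq_ltn_trans (ltn_expl _ _) => //; rewrite /K -addnn leq_addr.
exists K.+1 => //; rewrite sigma_iter_false.
pose d := absz (j + (2 ^ K)%N - 1)%R.
apply: (@infix_mkseq _ _ _ _ _ d); first by rewrite /d expnS; lia.
move=> t lt_t; have -> : (d + t).+1 = j + t%:Z + (2 ^ K)%N :> int by rewrite /d; lia.
by rewrite toeplitz_addr_exp2_even ?odd_double //; lia.
Qed.

Definition toeplitz_shift (c : int) : biseq := fun i => toeplitz (i + c).

Lemma toeplitz_shift_in_Xsigma c : in_Xsigma (toeplitz_shift c).
Proof.
move=> i n; have [k k_ge1 win] := toeplitz_window (i + c) n.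
exists false, k; split => //; congr (infix _ _): win.
by apply: eq_mkseq => t; rewrite /toeplitz_shift; congr toeplitz; lia.
Qed.

Definition Z3_of_int (c : int) : nat -> int := fun n => (c %% pow3 n)%Z.

Lemma is_Z3_of_int c : is_Z3 (Z3_of_int c).
Proof.
have pow3_gt0 n : 0 < pow3 n by rewrite ltz_nat expn_gt0.
move=> n; rewrite /Z3_of_int modz_ge0 ?ltz_pmod ?gt_eqF //; split => //.
have -> : (c %% pow3 n.+1)%Z = - (c %/ pow3 n.+1)%Z * 3 * pow3 n + c.
  by rewrite {3}(divz_eq c (pow3 n.+1)) /pow3 expnS PoszM; ring.
by rewrite modzMDl modz_mod.
Qed.

Lemma Titer_fst_eq n (p q : Defs.point) : p.1 = q.1 -> (Titer n p).1 = (Titer n q).1.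
Proof.
move=> eq_pq; case: n => m /=; first by elim: m => //= m ->.
by elim: m => [|m IH] /=; rewrite ?eq_pq ?IH.
Qed.

Lemma Titer_snd_eq n (p q : Defs.point) k :
  p.2 k = q.2 k -> (Titer n p).2 k = (Titer n q).2 k.
Proof.
move=> eq_pq; case: n => m; rewrite /Titer; [elim: m | elim: m.+1] => //= m' IH;
  by rewrite /Z3_addc IH.
Qed.

Lemma Titer_fst_Posz (m : nat) (p : Defs.point) i : (Titer m p).1 i = p.1 (i + m%:Z).
Proof.
elim: m i => [|m IH] i /=; first by rewrite addr0.
by rewrite /shift IH; congr (p.1 _); lia.
Qed.

Section Metric.
Variable R : realType.

Lemma dX_le (x y : biseq) M : (forall i, `|i| <= M%:Z -> x i = y i) ->
  dX x y <= (2%:R : R) ^- M.+1.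
Proof.
move=> eq_xy; apply: ge_inf; last by right; exists M.
by exists 0 => r [->|[n [_ ->]]] //; rewrite invr_ge0 exprn_ge0.
Qed.

Lemma dX_ge1 (x y : biseq) : x 0 <> y 0 -> 1 <= dX x y :> R.
Proof.
move=> neq_xy0; apply: lb_le_inf; first by exists 1; left.
by move=> r [->|[n [eq_xy _]]] //; case: neq_xy0; apply: eq_xy; rewrite normr0.
Qed.

Lemma dZ3_le (z w : nat -> int) N : z N = w N -> dZ3 z w <= (3%:R : R) ^- N.
Proof.
move=> eq_zw; apply: ge_inf; last by exists N.
by exists 0 => r [n [_ ->]]; rewrite invr_ge0 exprn_ge0.
Qed.

Lemma dist_lt (p q : Defs.point) M N (delta : R) :
  (forall i, `|i| <= M%:Z -> p.1 i = q.1 i) -> p.2 N = q.2 N ->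
  (2%:R : R) ^- M.+1 < delta -> (3%:R : R) ^- N < delta -> dist p q < delta.
Proof.
move=> eq_pq1 eq_pq2 lt2 lt3; rewrite /dist gt_max.
apply/andP; split; first exact: le_lt_trans (dX_le eq_pq1) lt2.
exact: le_lt_trans (dZ3_le eq_pq2) lt3.
Qed.

Lemma invr_expn_lt (b m : nat) (delta : R) : (1 < b)%N -> 0 < delta ->
  (Num.bound delta^-1 <= m)%N -> (b%:R : R) ^- m < delta.
Proof.
move=> b_gt1 delta_gt0 le_m.
have b_gt0 : (0 : R) < b%:R ^+ m by rewrite exprn_gt0 // ltr0n; lia.
rewrite -[X in _ < X]invrK ltf_pV2 ?posrE ?invr_gt0 //.
apply: (lt_le_trans (archi_boundP _)); first by rewrite invr_ge0 ltW.
apply: (@le_trans _ _ m%:R); first by rewrite ler_nat.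
by rewrite -natrX ler_nat ltnW // ltn_expl.
Qed.

Lemma exists_small_scale (delta : R) : 0 < delta ->
  exists N : nat, (2%:R : R) ^- N.+1 < delta /\ (3%:R : R) ^- N < delta.
Proof.
move=> delta_gt0; exists (Num.bound delta^-1).
by rewrite !invr_expn_lt.
Qed.

End Metric.

Lemma not_expansive (R : realType) : ~ expansive R.
Proof.
move=> [delta [delta_gt0 separated]].
have [N [lt2 lt3]] := exists_small_scale delta_gt0.
pose p : Defs.point := (toeplitz_shift 0, Z3_of_int 0).
pose q : Defs.point := (toeplitz_shift 0, Z3_of_int (pow3 N)).
have neq_pq : p <> q.
  move=> /(congr1 (fun r : Defs.point => r.2 N.+1)) /=; rewrite /Z3_of_int mod0z.
  rewrite modz_small /pow3 ?ltz_nat ?ltn_exp2l //; have := expn_gt0 3 N; lia.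
have [n] := separated p q (conj (toeplitz_shift_in_Xsigma 0) (is_Z3_of_int 0))
  (conj (toeplitz_shift_in_Xsigma 0) (is_Z3_of_int _)) neq_pq.
apply/negP; rewrite -leNgt ltW // (dist_lt (M := N) (N := N)) //.
  by move=> i _; rewrite (@Titer_fst_eq n p q).
by apply: Titer_snd_eq; rewrite /= /Z3_of_int mod0z modzz.
Qed.

Lemma not_equicontinuous (R : realType) : ~ equicontinuous R.
Proof.
move=> equicont.
pose z := Z3_of_int 0.
pose p : Defs.point := (toeplitz_shift 0, z).
have [delta [delta_gt0 close]] :=
  equicont p (conj (toeplitz_shift_in_Xsigma 0) (is_Z3_of_int 0)) 1 ltr01.
have [N [lt2 lt3]] := exists_small_scale delta_gt0.
pose L := N.+1.*2.
have lt_NL : (N < 2 ^ L)%N by have := @ltn_expl 2 L isT; rewrite /L -addnn; lia.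
pose q : Defs.point := (toeplitz_shift (2 ^ L)%N, z).
have lt_pq : dist p q < delta.
  apply: (dist_lt (M := N) (N := N)) => // i le_i.
  rewrite /= /toeplitz_shift addr0 toeplitz_addr_exp2_even ?odd_double //.
  by apply: le_lt_trans le_i _; rewrite ltz_nat.
have := close q (conj (toeplitz_shift_in_Xsigma _) (is_Z3_of_int 0)) lt_pq (2 ^ L)%N.
apply/negP; rewrite -leNgt /dist le_max dX_ge1 //.
rewrite !Titer_fst_Posz /= /toeplitz_shift !add0r addr0 -PoszD addnn -mul2n -expnS.
by rewrite !toeplitz_exp2 /= odd_double.
Qed.

Theorem mainTheorem12 (R : realType) : ~ expansive R /\ ~ equicontinuous R.
Proof. by split; [apply: not_expansive | apply: not_equicontinuous]. Qed.
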